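(* Let $p$ be a prime, $q=p^k$, $f(x)\in\mathbb F_q[x]$ and $a\in\mathbb F_q$. Then $\sum_{s=1}^\infty N_s(f,a)x^s$ is a rational function of $x$. More precisely, let $d:=\deg\{u_s(f,a)\}_{s=1}^\infty$ and let $A:=(u_{i+j-1}(f,a))_{1\le i,j\le d+1}$ be the $(d+1)\times(d+1)$ Hankel matrix of the sequence. Then $AX=0$ has a nonzero integer solution, and for any nonzero integer solution $X=(c_d,\dots,c_1,c_0)^T$ of $AX=0$ we have $$\sum_{s=1}^{\infty}N_{s}(f,a)x^s=\frac{x}{1-qx}+\frac{\sum_{i=1}^{d}\Big(\sum_{\substack{j+k=i\\ k\ge0,\ j\ge1}}c_k\,u_j(f,a)\Big)x^i}{\sum_{i=0}^{d}c_ix^i}.$$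
   Context: $\mathbb F_q$ is the finite field with $q=p^k$ elements. For $s\ge1$, $N_s(f,a)$ is the number of $(x_1,\dots,x_s)\in\mathbb F_q^s$ with $f(x_1)+\cdots+f(x_s)=a$, and $u_s(f,a):=N_s(f,a)-q^{s-1}$. A sequence of integers $\{a_s\}_{s\ge1}$ is a linear recursion sequence if there is $g(x)=\sum_{i=0}^d k_ix^i\in\mathbb Z[x]$ with $k_d\neq0$ such that $k_0a_{j+1}+\cdots+k_da_{j+d+1}=0$ for all $j\ge0$; such $g$ is a generating polynomial. The generating polynomials form a principal ideal of $\mathbb Z[x]$ generated by a polynomial of minimal degree with coprime coefficients (the minimal polynomial); the degree of the sequence is the degree of its minimal polynomial. (It is a fact that $\{u_s(f,a)\}$ is a linear recursion sequence, so $d$ is well defined.) *)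

From HB Require Import structures.
From mathcomp Require Import all_boot all_order all_algebra all_field.
Set Implicit Arguments. Unset Strict Implicit. Unset Printing Implicit Defensive.
Import Order.TTheory GRing.Theory Num.Theory.
Local Open Scope ring_scope.

Definition Nsol (F : finFieldType) (f : {poly F}) (a : F) (s : nat) : int :=
  (#|[set x : {ffun 'I_s -> F} | \sum_(i < s) f.[x i] == a]|)%:Z.

(* u_s(f,a) = N_s(f,a) - q^(s-1), q = #|F| ; meaningful for s >= 1 *)
Definition usol (F : finFieldType) (f : {poly F}) (a : F) (s : nat) : int :=
  Nsol f a s - ((#|F| ^ s.-1)%N)%:Z.

(* g = sum_i k_i x^i (k_d <> 0, i.e. g != 0) is a generating polynomial of the
   sequence (a_s)_{s>=1}, encoded as a : nat -> int with a s = a_s: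
   k_0 a_{j+1} + ... + k_d a_{j+d+1} = 0 for all j >= 0. *)
Definition gen_poly (a : nat -> int) (g : {poly int}) : Prop :=
  g != 0 /\ forall j : nat, \sum_(i < size g) g`_i * a (j + i + 1)%N = 0.

Definition lin_rec_seq (a : nat -> int) : Prop := exists g, gen_poly a g.

(* degree of the sequence = degree of its minimal polynomial
   = the minimal degree of a generating polynomial *)
Definition seq_degree (a : nat -> int) (d : nat) : Prop :=
  (exists g, gen_poly a g /\ (size g).-1 = d) /\
  (forall g, gen_poly a g -> (d <= (size g).-1)%N).

(* Hankel matrix (a_{i+j-1})_{1<=i,j<=d+1}, 0-indexed *)
Definition hankel (a : nat -> int) (d : nat) : 'M[int]_(d.+1) :=
  \matrix_(i < d.+1, j < d.+1) a (i + j + 1)%N.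

(* from X = (c_d, ..., c_1, c_0)^T, the coefficient c_k *)
Definition cX (d : nat) (X : 'cV[int]_(d.+1)) (k : nat) : int :=
  if (k <= d)%N then X (inord (d - k)) ord0 else 0.

Definition denom (d : nat) (X : 'cV[int]_(d.+1)) : {poly int} :=
  \poly_(i < d.+1) cX X i.

Definition numer (a : nat -> int) (d : nat) (X : 'cV[int]_(d.+1)) : {poly int} :=
  \poly_(i < d.+1) (\sum_(1 <= j < i.+1) cX X (i - j) * a j).

(* coefficient of x^n in the formal power series sum_{s>=1} b_s x^s *)
Definition ser (b : nat -> int) (n : nat) : int := if n == 0%N then 0 else b n.

(* coefficient of x^n in the product (polynomial P) * (series sum_{s>=1} b_s x^s) *)
Definition polyser_coef (P : {poly int}) (b : nat -> int) (n : nat) : int :=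
  \sum_(i < n.+1) P`_i * ser b (n - i).

From HB Require Import structures.
From mathcomp Require Import all_boot all_order all_algebra all_field.
From mathcomp Require Import zify ring.
From Stdlib Require Import Classical.
Import Order.TTheory GRing.Theory Num.Theory.
Set Implicit Arguments. Unset Strict Implicit. Unset Printing Implicit Defensive.
Local Open Scope ring_scope.

(* Let N_s(b) count the s-tuples whose values sum to b.
      Splitting off the first coordinate gives N_{s+1}(b) = sum_y N_s(b - f(y)),
      so the vector (N_s(b))_b evolves by a fixed integer matrix M, and
      u_{s+1} = N_{s+1}(a) - sum_b N_s(b) is a fixed linear form of it.  By
      Cayley-Hamilton, char_poly M is a generating polynomial of (u_s): the
      sequence is a linear recursion sequence, so it has a degree d (least
      degree of a generating polynomial, by well-ordering of nat).
   2. Hankel kernel.  The coefficients of a generating polynomial g of degree d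
      lie in the kernel of the Hankel matrix A.  Conversely, for X in that
      kernel the windowed sums b_i = sum_j X_j u_{i+j+1} satisfy the recurrence
      of g and vanish for i <= d, hence vanish identically ([rec_vanish]).
   3. Series.  This says that  denom X * sum_s u_s x^s  is the polynomial
      numer u X.  Together with  (1 - qx) * sum_s q^(s-1) x^s = x  and
      N_s = u_s + q^(s-1), this gives the claimed identity of coefficients. *)

Lemma card_set_sum (U : finType) (P : pred U) : #|[set x | P x]| = (\sum_x P x)%N.
Proof. by rewrite -sum1dep_card big_mkcond. Qed.

Definition cons_ffun (U : finType) s (y : U) (x : {ffun 'I_s -> U}) : {ffun 'I_s.+1 -> U} :=
  [ffun i => if unlift ord0 i is Some j then x j else y].

Lemma sum_ffunS (U : finType) s (F : {ffun 'I_s.+1 -> U} -> nat) :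
  (\sum_x F x = \sum_(y : U) \sum_(x : {ffun 'I_s -> U}) F (cons_ffun y x))%N.
Proof.
rewrite pair_big /= (reindex (fun p : U * {ffun 'I_s -> U} => cons_ffun p.1 p.2)) //.
apply: onW_bij; exists (fun x : {ffun 'I_s.+1 -> U} => (x ord0, [ffun i => x (lift ord0 i)])).
  case=> y x /=; rewrite /cons_ffun ffunE unlift_none; congr (_, _).
  by apply/ffunP => i; rewrite !ffunE liftK.
move=> x; apply/ffunP => i; rewrite /cons_ffun ffunE.
by case: unliftP => [j|] -> //; rewrite ffunE.
Qed.

Lemma PoszX (m n : nat) : ((m ^ n)%N)%:Z = m%:Z ^+ n.
Proof. by rewrite -!natz natrX. Qed.

(* Well-ordering of nat, for arbitrary (undecidable) predicates. *)
Lemma ex_least_nat (P : nat -> Prop) :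
  (exists n, P n) -> exists m, P m /\ forall k, P k -> (m <= k)%N.
Proof.
move=> [n Pn]; elim/ltn_ind: n Pn => n IH Pn.
have [[k [lt_kn Pk]] | no_smaller] := classic (exists k, (k < n)%N /\ P k).
  exact: IH k lt_kn Pk.
exists n; split=> // k Pk; rewrite leqNgt; apply/negP => lt_kn.
by apply: no_smaller; exists k.
Qed.

Lemma seq_degree_exists (u : nat -> int) : lin_rec_seq u -> exists d, seq_degree u d.
Proof.
move=> [g gen_g].
have [d [[g' [gen_g' deg_g']] least]] :=
  @ex_least_nat (fun d => exists g, gen_poly u g /\ (size g).-1 = d)
    (ex_intro _ _ (ex_intro _ g (conj gen_g erefl))).
exists d; split; first by exists g'.
by move=> h gen_h; apply: least; exists h.
Qed.

Lemma horner_mx_coef (R : comNzRingType) n (A : 'M[R]_n.+1) (p : {poly R}) :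
  horner_mx A p = \sum_(i < size p) p`_i *: A ^+ i.
Proof.
rewrite -{1}[p]coefK poly_def linear_sum; apply: eq_bigr => i _.
by rewrite linearZ /= rmorphXn /= horner_mx_X.
Qed.

(* Transfer-matrix principle: a sequence read off by a fixed linear form from
   the orbit of a vector under a square integer matrix M is annihilated by the
   recurrence with coefficients char_poly M (Cayley-Hamilton). *)
Lemma transfer_gen_poly n (M : 'M[int]_n) (L : 'rV[int]_n)
    (w : nat -> 'cV[int]_n) (u : nat -> int) :
  (forall t, w t.+1 = M *m w t) -> (forall t, u t.+1 = (L *m w t) 0 0) ->
  gen_poly u (char_poly M).
Proof.
move=> wS uS; split; first exact/monic_neq0/char_poly_monic.
move=> j; case: n M L w wS uS => [|n] M L w wS uS.
  by rewrite size_char_poly big_ord1 /= addn0 addn1 uS (thinmx0 L) mul0mx mxE mulr0.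
have w_pow i : w (j + i)%N = M ^+ i *m w j.
  by elim: i => [|i IH]; rewrite ?addn0 ?mul1mx // addnS wS IH exprS mulmxA.
transitivity ((L *m (horner_mx M (char_poly M) *m w j)) 0 0); last first.
  by rewrite Cayley_Hamilton mul0mx mulmx0 mxE.
rewrite horner_mx_coef mulmx_suml mulmx_sumr summxE; apply: eq_bigr => i _.
by rewrite -scalemxAl -scalemxAr mxE -w_pow addn1 uS.
Qed.

Lemma gen_poly_size (u : nat -> int) (g : {poly int}) :
  gen_poly u g -> size g = (size g).-1.+1.
Proof. by move=> [g_neq0 _]; rewrite prednK // size_poly_gt0. Qed.

Lemma rec_vanish (b : nat -> int) (g : {poly int}) d :
  size g = d.+1 -> (forall j, \sum_(i < d.+1) g`_i * b (j + i)%N = 0) ->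
  (forall i, (i < d)%N -> b i = 0) -> forall i, b i = 0.
Proof.
move=> sz rec init i; elim/ltn_ind: i => i IH.
have [lt_id | le_di] := ltnP i d; first exact: init.
have lc_neq0 : g`_d != 0.
  by rewrite -[d]/(d.+1.-1) -sz -/(lead_coef g) lead_coef_eq0 -size_poly_eq0 sz.
have := rec (i - d)%N; rewrite big_ord_recr /= big1.
  by rewrite add0r subnK // => /eqP; rewrite mulf_eq0 (negbTE lc_neq0) => /eqP.
by move=> k _; rewrite IH ?mulr0 //; have := ltn_ord k; lia.
Qed.

(* X annihilates every window of length d+1 of u, not only the d+1 windows
   recorded in the Hankel matrix. *)
Definition annihilates (u : nat -> int) d (X : 'cV[int]_d.+1) : Prop :=
  forall i, \sum_(j < d.+1) X j 0 * u (i + j + 1)%N = 0.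

Lemma hankel_kernel_annihilates (u : nat -> int) (g : {poly int}) d (X : 'cV[int]_d.+1) :
  gen_poly u g -> (size g).-1 = d -> hankel u d *m X = 0 -> annihilates u X.
Proof.
move=> gen_g deg_g hX; have sz := gen_poly_size gen_g; rewrite deg_g in sz.
case: gen_g => _ rec.
apply: (rec_vanish sz) => [j | i lt_id].
  under eq_bigr do rewrite mulr_sumr.
  rewrite exchange_big /=; apply: big1 => k _.
  transitivity (X k 0 * \sum_(i < d.+1) g`_i * u (j + k + i + 1)%N).
    by rewrite mulr_sumr; apply: eq_bigr => i _; rewrite mulrCA -!addnA (addnCA i).
  by have := rec (j + k)%N; rewrite sz => ->; rewrite mulr0.
have := congr1 (fun v : 'cV_d.+1 => v (@Ordinal d.+1 i (ltnW lt_id)) 0) hX.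
rewrite !mxE => hi; rewrite -[RHS]hi; apply: eq_bigr => j _; by rewrite mxE mulrC.
Qed.

Lemma gen_poly_hankel_kernel (u : nat -> int) (g : {poly int}) d :
  gen_poly u g -> (size g).-1 = d ->
  exists X : 'cV[int]_d.+1, X != 0 /\ hankel u d *m X = 0.
Proof.
move=> gen_g deg_g; have sz := gen_poly_size gen_g; rewrite deg_g in sz.
case: gen_g => g_neq0 rec.
exists (\col_j g`_j); split.
  apply: contraNneq g_neq0 => /matrixP /(_ (inord d) 0).
  rewrite !mxE inordK // -deg_g => lc0.
  by rewrite -lead_coef_eq0 /lead_coef lc0.
apply/matrixP => i k; rewrite !mxE -[RHS](rec i) sz.
by apply: eq_bigr => j _; rewrite !mxE mulrC.
Qed.

Section Counting.
Variables (T : finType) (G : finZmodType) (phi : T -> G).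

Definition count_sols (s : nat) (b : G) : nat :=
  #|[set x : {ffun 'I_s -> T} | \sum_(i < s) phi (x i) == b]|.

Lemma count_sols_total s : (\sum_b count_sols s b)%N = (#|T| ^ s)%N.
Proof.
have -> : (#|T| ^ s)%N = #|{ffun 'I_s -> T}| by rewrite card_ffun card_ord.
rewrite -sum1_card.
under eq_bigr do rewrite /count_sols card_set_sum.
rewrite exchange_big /=; apply: eq_bigr => x _.
rewrite (bigD1 (\sum_(i < s) phi (x i))) //= eqxx big1 // => b.
by rewrite eq_sym => /negbTE ->.
Qed.

Lemma count_solsS s b : count_sols s.+1 b = (\sum_y count_sols s (b - phi y)%R)%N.
Proof.
rewrite /count_sols card_set_sum sum_ffunS; apply: eq_bigr => y _.
rewrite card_set_sum; apply: eq_bigr => x _.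
rewrite big_ord_recl /cons_ffun ffunE unlift_none.
under eq_bigr do rewrite ffunE liftK.
by rewrite [_ == b - _]eq_sym subr_eq eq_sym addrC.
Qed.

Definition step_mx : 'M[int]_#|G| :=
  \matrix_(i, j) \sum_y (enum_val j == enum_val i - phi y)%:R.

Definition count_vec s : 'cV[int]_#|G| := \col_i (count_sols s (enum_val i))%:Z.

Lemma count_vecS s : count_vec s.+1 = step_mx *m count_vec s.
Proof.
apply/matrixP => i k; rewrite !mxE count_solsS -natz natr_sum.
under [RHS]eq_bigr do rewrite !mxE mulr_suml.
rewrite exchange_big /=; apply: eq_bigr => y _.
rewrite -(big_enum_val (fun c => (c == enum_val i - phi y)%:R * (count_sols s c)%:Z)) /=.
rewrite (bigD1 (enum_val i - phi y)) //= eqxx mul1r big1 ?addr0 ?natz //.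
by move=> c /negbTE ->; rewrite mul0r.
Qed.

(* u_s = N_s(b) - #|T|^(s-1) is a linear recursion sequence: the linear form
   "entry b of M v minus the sum of the entries of v" reads it off. *)
Lemma count_excess_lin_rec (b : G) :
  lin_rec_seq (fun s => (count_sols s b)%:Z - ((#|T| ^ s.-1)%N)%:Z).
Proof.
exists (char_poly step_mx).
apply: (transfer_gen_poly (L := \row_k (step_mx (enum_rank b) k - 1))) count_vecS _ => t.
rewrite /= -count_sols_total (big_enum_val (fun c => count_sols t c)) /= !mxE.
under [RHS]eq_bigr do rewrite !mxE mulrBl mul1r.
rewrite sumrB; congr (_ - _).
  have := congr1 (fun v : 'cV_#|G| => v (enum_rank b) 0) (count_vecS t).
  rewrite /= !mxE enum_rankK => ->.
  by apply: eq_bigr => j _; rewrite !mxE enum_rankK.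
by rewrite -[LHS]natz natr_sum; apply: eq_bigr => k _; rewrite natz.
Qed.

End Counting.

Definition trunc (b : nat -> int) (n : nat) : {poly int} := \poly_(i < n.+1) ser b i.

Lemma coef_mul_trunc (P : {poly int}) b m n :
  (m <= n)%N -> (P * trunc b n)`_m = polyser_coef P b m.
Proof.
move=> le_mn; rewrite coefM; apply: eq_bigr => i _.
by rewrite coef_poly ltnS (leq_trans (leq_subr _ _) le_mn).
Qed.

Lemma trunc_split (b b1 b2 : nat -> int) n :
  (forall s, b s = b1 s + b2 s) -> trunc b n = trunc b1 n + trunc b2 n.
Proof.
move=> bE; apply/polyP => i; rewrite coefD !coef_poly /ser bE.
by case: ifP => _; case: (i == 0)%N; rewrite ?addr0.
Qed.

Lemma truncS b n : trunc b n.+1 = trunc b n + ser b n.+1 *: 'X^(n.+1).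
Proof.
apply/polyP => i; rewrite coefD coefZ coefXn !coef_poly.
case: (ltngtP i n.+1) => [lt_in | gt_in | ->].
- by rewrite ltnS ltnW // mulr0 addr0.
- by rewrite ltnNge gt_in /= mulr0 addr0.
- by rewrite ltnS leqnn mulr1 add0r.
Qed.

Lemma trunc_geom (q : int) n :
  (1 - q%:P * 'X) * trunc (fun s => q ^+ s.-1) n = 'X - (q ^+ n)%:P * 'X^(n.+1).
Proof.
elim: n => [|n IH].
  have -> : trunc (fun s => q ^+ s.-1) 0 = 0.
    by apply/polyP => i; rewrite coef_poly coef0; case: i.
  by rewrite mulr0 expr0 mul1r expr1 subrr.
rewrite truncS mulrDr IH /ser /= -mul_polyC (exprS q) polyCM (exprS ('X : {poly int}) n.+1).
ring.
Qed.

Lemma coef_mul_agree (R : nzRingType) (A B C : {poly R}) n :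
  (forall m, (m <= n)%N -> A`_m = B`_m) -> (C * A)`_n = (C * B)`_n.
Proof. by move=> AB; rewrite !coefM; apply: eq_bigr => i _; rewrite AB // leq_subr. Qed.

Section DenominatorTimesSeries.
Variables (u : nat -> int) (d : nat) (X : 'cV[int]_d.+1).

Lemma cX_rev i : (i <= d)%N -> cX X (d - i) = X (inord i) 0.
Proof. by move=> le_id; rewrite /cX leq_subr; congr (X (inord _) _); lia. Qed.

Lemma denom_coef i : (denom X)`_i = cX X i.
Proof. by rewrite coef_poly /cX ltnS; case: leqP. Qed.

(* In degrees m <= d both sides are the same convolution sum. *)
Lemma denom_series_low m :
  (m <= d)%N -> polyser_coef (denom X) u m = (numer u X)`_m.
Proof.
move=> le_md; rewrite coef_poly ltnS le_md /polyser_coef.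
under eq_bigr do rewrite denom_coef.
rewrite -(big_mkord xpredT (fun i => cX X i * ser u (m - i))) big_nat_rev /=.
rewrite big_ltn // add0n subn1 /= subnn /ser /= mulr0 add0r.
apply: eq_big_nat => j /andP [ge1_j lt_jm].
rewrite subSS (_ : m - (m - j) = j)%N; last by lia.
by case: j ge1_j lt_jm.
Qed.

(* In degrees m > d the numerator vanishes and the series coefficient is the
   window sum of u starting at m - d, killed by X. *)
Lemma denom_series_high m : annihilates u X ->
  (d < m)%N -> polyser_coef (denom X) u m = (numer u X)`_m.
Proof.
move=> annX lt_dm; rewrite coef_poly ltnS leqNgt lt_dm /polyser_coef.
under eq_bigr do rewrite denom_coef.
rewrite -(big_mkord xpredT (fun i => cX X i * ser u (m - i))).
rewrite (@big_cat_nat _ _ _ d.+1) //=; last exact: ltnW.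
rewrite [X in _ + X]big1_seq ?addr0; last first.
  move=> i /andP [_]; rewrite mem_index_iota => /andP [lt_di _].
  by rewrite /cX leqNgt lt_di mul0r.
rewrite -[RHS](annX (m - d.+1)%N) big_nat_rev big_mkord; apply: eq_bigr => j _.
rewrite add0n subSS (cX_rev (ltn_ord j)) inord_val /ser.
rewrite (_ : m - (d - j) = m - d.+1 + j + 1)%N ?addn1 //.
have := ltn_ord j; lia.
Qed.

End DenominatorTimesSeries.

Lemma rational_series_identity (b u : nat -> int) (q : int) d (X : 'cV[int]_d.+1) :
  (forall s, b s = u s + q ^+ s.-1) -> annihilates u X ->
  forall n, polyser_coef (denom X * (1 - q%:P * 'X)) b n =
            ('X * denom X + (1 - q%:P * 'X) * numer u X)`_n.
Proof.
move=> bE annX n.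
have denom_u m : polyser_coef (denom X) u m = (numer u X)`_m.
  by case: (leqP m d) => [/denom_series_low | /(denom_series_high annX)].
rewrite -(coef_mul_trunc _ _ (leqnn n)) (trunc_split _ bE) mulrDr.
rewrite [LHS]coefD [RHS]coefD addrC; congr (_ + _).
  rewrite -mulrA trunc_geom mulrBr coefB mulrA coefMXn ltnSn subr0.
  by rewrite mulrC.
rewrite [denom X * _]mulrC -mulrA; apply: coef_mul_agree => m le_mn.
by rewrite coef_mul_trunc.
Qed.

Theorem theorem1p2 (F : finFieldType) (f : {poly F}) (a : F) :
  (exists d, seq_degree (usol f a) d) /\
  forall d : nat, seq_degree (usol f a) d ->
    (exists X : 'cV[int]_(d.+1), X != 0 /\ hankel (usol f a) d *m X = 0) /\
    forall X : 'cV[int]_(d.+1), X != 0 -> hankel (usol f a) d *m X = 0 ->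
      forall n : nat,
        polyser_coef (denom X * (1 - (#|F|%:Z)%:P * 'X)) (Nsol f a) n =
        ('X * denom X + (1 - (#|F|%:Z)%:P * 'X) * numer (usol f a) X)`_n.
Proof.
have u_rec : lin_rec_seq (usol f a) := count_excess_lin_rec (fun y => f.[y]) a.
split; first exact: seq_degree_exists.
move=> d [[g [gen_g deg_g]] _]; split; first exact: gen_poly_hankel_kernel gen_g deg_g.
move=> X _ hX; apply: rational_series_identity; last first.
  exact: hankel_kernel_annihilates gen_g deg_g hX.
by move=> s; rewrite /usol PoszX subrK.
Qed.
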